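(* Let $\Bbbk\supseteq\mathbb Q$ be a commutative ring, $\mathfrak g$ a Lie algebra over $\Bbbk$, $H=\mathcal U(\mathfrak g)$, $C=S(\mathfrak g)$, and $\xi:S(\mathfrak g)\to\mathcal U(\mathfrak g)$ the symmetrization map $x_1\cdots x_n\mapsto\frac1{n!}\sum_{\sigma\in S_n}x_{\sigma(1)}\cdots x_{\sigma(n)}$. For $h\in\mathfrak g$ let $D_h:=\xi^{-1}\circ L_h\circ\xi:S(\mathfrak g)\to S(\mathfrak g)$, where $L_h(u)=hu$ is left multiplication in $\mathcal U(\mathfrak g)$. Then for all $h,x\in\mathfrak g$ and $n\ge0$, $$D_h(x^n)=\xi^{-1}(hx^n)=\sum_{k=0}^n\binom nk B_{n-k}\,x^k\cdot\bigl((\operatorname{ad}x)^{n-k}(h)\bigr),$$ where the product on the right is taken in $S(\mathfrak g)$ and $(\operatorname{ad}x)(y)=[x,y]$.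
   Context: $\xi$ is a coalgebra isomorphism $S(\mathfrak g)\to\mathcal U(\mathfrak g)$ which is the identity on $\mathfrak g$ (here one uses that $\mathfrak g$ is such that the PBW theorem holds, e.g. $\mathfrak g$ projective over $\Bbbk$). Bernoulli numbers are defined by $\frac{z}{e^z-1}=\sum_{m\ge0}\frac{B_m}{m!}z^m$. *)

From HB Require Import structures.
From mathcomp Require Import all_boot all_order all_algebra all_fingroup.
Set Implicit Arguments. Unset Strict Implicit. Unset Printing Implicit Defensive.
Import Order.TTheory GRing.Theory Num.Theory.
Local Open Scope ring_scope.

Definition lie_bracket (k : comUnitRingType) (g : lmodType k) (br : g -> g -> g) : Prop :=
  [/\ (forall y, linear (br ^~ y)),
      (forall x, linear (br x)),
      (forall x, br x x = 0) &
      (forall x y z, br x (br y z) + br y (br z x) + br z (br x y) = 0)].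

Definition is_enveloping_algebra (k : comUnitRingType) (g : lmodType k)
    (br : g -> g -> g) (H : algType k) (iota : {linear g -> H}) : Prop :=
  (forall x y, iota (br x y) = iota x * iota y - iota y * iota x) /\
  (forall (A : algType k) (f : {linear g -> A}),
     (forall x y, f (br x y) = f x * f y - f y * f x) ->
     (exists phi : {lrmorphism H -> A}, forall x, phi (iota x) = f x) /\
     (forall phi psi : {lrmorphism H -> A},
        (forall x, phi (iota x) = f x) -> (forall x, psi (iota x) = f x) ->
        phi =1 psi)).

Definition is_symmetric_algebra (k : comUnitRingType) (g : lmodType k)
    (C : comAlgType k) (j : {linear g -> C}) : Prop :=
  forall (A : comAlgType k) (f : {linear g -> A}),
     (exists phi : {lrmorphism C -> A}, forall x, phi (j x) = f x) /\
     (forall phi psi : {lrmorphism C -> A},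
        (forall x, phi (j x) = f x) -> (forall x, psi (j x) = f x) ->
        phi =1 psi).

Definition is_symmetrization (k : comUnitRingType) (g : lmodType k)
    (C : comAlgType k) (j : {linear g -> C}) (H : algType k) (iota : {linear g -> H})
    (xi : {linear C -> H}) : Prop :=
  forall (n : nat) (xs : 'I_n -> g),
    xi (\prod_(i < n) j (xs i)) =
      (n`!%:R)^-1 *: \sum_(s : 'S_n) \prod_(i < n) iota (xs (s i)).

Definition Dop (k : comUnitRingType) (g : lmodType k) (C : comAlgType k)
    (H : algType k) (iota : {linear g -> H}) (xi : C -> H) (xi_inv : H -> C)
    (h : g) (u : C) : C :=
  xi_inv (iota h * xi u).

(* z/(e^z - 1) = sum_m B_m z^m / m!, i.e. ((e^z-1)/z) * sum_m (B_m/m!) z^m = 1;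
   comparing coefficients of z^m:
     sum_{j=0}^{m} (B_j / j!) * 1/(m-j+1)! = [m == 0].
   Hence b_m := B_m/m! satisfies b_0 = 1 and
     b_m = - sum_{j<m} b_j / (m-j+1)!  for m >= 1.
   bern_scaled_seq n lists b_0, ..., b_{n-1}. *)
Fixpoint bern_scaled_seq (n : nat) : seq rat :=
  match n with
  | 0 => [::]
  | n'.+1 =>
      let s := bern_scaled_seq n' in
      rcons s (if n' == 0%N then 1
               else - \sum_(j < n') nth 0 s j / ((n' - j).+1)`!%:R)
  end.

Definition bernoulli (m : nat) : rat :=
  m`!%:R * nth 0 (bern_scaled_seq m.+1) m.

From HB Require Import structures.
From mathcomp Require Import all_boot all_order all_algebra all_fingroup.
From mathcomp Require Import ring zify.
Set Implicit Arguments. Unset Strict Implicit. Unset Printing Implicit Defensive.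
Import Order.TTheory GRing.Theory Num.Theory.
Local Open Scope ring_scope.

(* With X := iota x, the symmetrization of x^q y averages the positions of the single
   factor y:  xi (x^q y) = 1/(q+1) * sum_p X^p Y X^(q-p).  Commuting Y to the left via
   X^p Y = sum_i C(p,i) ad_X^i(Y) X^(p-i) turns xi applied to the claimed right-hand side
   into sum_m c_m ad_X^m(Y) X^(n-m), where after reindexing
   c_m = n!/(n-m)! * sum_(j<=m) (B_j/j!) / (m-j+1)!.  This is [m = 0], which is the
   coefficient form of (e^z - 1)/z * z/(e^z - 1) = 1; hence xi (RHS) = Y X^n. *)

Definition bernoulli_scaled (m : nat) : rat := nth 0 (bern_scaled_seq m.+1) m.

Lemma bernoulliE m : bernoulli m = m`!%:R * bernoulli_scaled m.
Proof. by []. Qed.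

Lemma size_bern_scaled_seq n : size (bern_scaled_seq n) = n.
Proof. by elim: n => //= n IH; rewrite size_rcons IH. Qed.

Lemma nth_bern_scaled_seq n i :
  (i < n)%N -> nth 0 (bern_scaled_seq n) i = bernoulli_scaled i.
Proof.
elim: n => // n IH; rewrite ltnS leq_eqVlt => /orP[/eqP -> //|ltin].
by rewrite /= nth_rcons size_bern_scaled_seq ltin IH.
Qed.

Lemma bernoulli_scaledS m :
  bernoulli_scaled m.+1 = - \sum_(i < m.+1) bernoulli_scaled i / ((m.+1 - i).+1)`!%:R.
Proof.
rewrite {1}/bernoulli_scaled.
have -> : bern_scaled_seq m.+2 = rcons (bern_scaled_seq m.+1)
    (- \sum_(i < m.+1) nth 0 (bern_scaled_seq m.+1) i / ((m.+1 - i).+1)`!%:R) by [].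
rewrite nth_rcons size_bern_scaled_seq ltnn eqxx.
by congr (- _); apply: eq_bigr => i _; rewrite nth_bern_scaled_seq.
Qed.

Lemma bernoulli_scaled_rec m :
  \sum_(i < m.+1) bernoulli_scaled i / ((m - i).+1)`!%:R = (m == 0%N)%:R.
Proof.
rewrite big_ord_recr /= subnn divr1.
by case: m => [|m]; rewrite ?big_ord0 ?add0r // bernoulli_scaledS subrr.
Qed.

Lemma natr_fact_neq0 (a : nat) : (a`!%:R : rat) != 0.
Proof. by rewrite pnatr_eq0 -lt0n fact_gt0. Qed.

Lemma binomial_ratE a c : (c <= a)%N ->
  ('C(a, c)%:R : rat) = a`!%:R / (c`!%:R * (a - c)`!%:R).
Proof.
move=> le_ca; rewrite -(bin_fact le_ca) !natrM mulrK //.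
by rewrite unitrM !unitfE !natr_fact_neq0.
Qed.

Lemma bernoulli_binomial_term n m d : (d <= m)%N -> (m <= n)%N ->
  'C(n, n - d)%:R * bernoulli d / (n - d).+1%:R * 'C((n - d).+1, (m - d).+1)%:R
  = n`!%:R / (n - m)`!%:R * (bernoulli_scaled d / ((m - d).+1)`!%:R) :> rat.
Proof.
move=> le_dm le_mn.
rewrite bernoulliE !binomial_ratE; try lia.
have -> : (n - (n - d) = d)%N by lia.
have -> : ((n - d).+1 - (m - d).+1 = n - m)%N by lia.
rewrite factS natrM.
have := natr_fact_neq0 d; have := natr_fact_neq0 (n - d).
have := natr_fact_neq0 (n - m); have := natr_fact_neq0 (m - d).+1.
have : (1 + (n - d)%:R : rat) != 0 by rewrite addrC natr1 pnatr_eq0.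
by move=> *; field; apply/and5P.
Qed.

Lemma bernoulli_binomial_sum n m : (m <= n)%N ->
  \sum_(i < n.+1 | (n - i <= m)%N)
     'C(n, i)%:R * bernoulli (n - i) / i.+1%:R * 'C(i.+1, (m - (n - i)).+1)%:R
  = (m == 0%N)%:R :> rat.
Proof.
move=> le_mn; rewrite (reindex_inj rev_ord_inj) /=.
rewrite (eq_bigl (fun d : 'I_n.+1 => (d < m.+1)%N)); last first.
  by move=> d; rewrite subSS; have := ltn_ord d; lia.
rewrite (eq_bigr (fun d : 'I_n.+1 =>
    n`!%:R / (n - m)`!%:R * (bernoulli_scaled d / ((m - d).+1)`!%:R))); last first.
  move=> d le_dm; have lt_dn := ltn_ord d.
  rewrite subSS; have -> : (n - (n - d) = d)%N by lia.
  by rewrite bernoulli_binomial_term //; lia.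
rewrite -(big_ord_widen _ (fun d => n`!%:R / (n - m)`!%:R *
  (bernoulli_scaled d / ((m - d).+1)`!%:R))) // -mulr_sumr bernoulli_scaled_rec.
by case: eqP => [->|_]; rewrite ?mulr0 // subn0 mulr1 divff ?natr_fact_neq0.
Qed.

Section QAlgebra.
Variable k : comUnitRingType.
Hypothesis natS_unit : forall n : nat, (n.+1)%:R \is a @GRing.unit k.

Lemma natr_unit n : (0 < n)%N -> (n%:R : k) \is a GRing.unit.
Proof. by case: n. Qed.

Lemma natr_fact_unit m : (m`!%:R : k) \is a GRing.unit.
Proof. exact: natr_unit (fact_gt0 m). Qed.

Lemma intr_denq_unit (x : rat) : ((denq x)%:~R : k) \is a GRing.unit.
Proof. by have := denq_gt0 x; case: (denq x) => // d /natr_unit. Qed.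

Lemma ratr_mul_denq (x : rat) : ratr x * (denq x)%:~R = (numq x)%:~R :> k.
Proof. by rewrite divrK ?intr_denq_unit. Qed.

Lemma ratr_mulz (x : rat) (p q : int) :
  x * q%:~R = p%:~R -> ratr x * q%:~R = p%:~R :> k.
Proof.
move=> xqp; apply: (mulIr (intr_denq_unit x)).
rewrite mulrAC ratr_mul_denq -!intrM; congr intr.
by apply: (@intr_inj rat); rewrite !intrM numqE mulrAC xqp.
Qed.

Lemma ratrD (x y : rat) : ratr (x + y) = ratr x + ratr y :> k.
Proof.
apply: (mulIr (rpredM (intr_denq_unit x) (intr_denq_unit y))).
rewrite -intrM (@ratr_mulz _ (numq x * denq y + numq y * denq x)).
  by rewrite intrD !intrM -!ratr_mul_denq; ring.
by rewrite intrD !intrM !numqE; ring.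
Qed.

Lemma ratrM (x y : rat) : ratr (x * y) = ratr x * ratr y :> k.
Proof.
apply: (mulIr (rpredM (intr_denq_unit x) (intr_denq_unit y))).
rewrite -intrM (@ratr_mulz _ (numq x * numq y)).
  by rewrite !intrM -!ratr_mul_denq; ring.
by rewrite !intrM !numqE; ring.
Qed.

Lemma ratr_natS_inv n : ratr (n.+1%:R^-1) = (n.+1%:R)^-1 :> k.
Proof.
apply: (mulIr (natS_unit n)); rewrite mulVr //.
apply: (@ratr_mulz _ 1 n.+1).
by rewrite -!pmulrn mulVf ?pnatr_eq0.
Qed.

Lemma ratr_sum (I : finType) (P : pred I) (F : I -> rat) :
  ratr (\sum_(i | P i) F i) = \sum_(i | P i) ratr (F i) :> k.
Proof. exact: (big_morph _ ratrD (ratr_nat k 0)). Qed.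

Lemma bernoulli_binomial_sum_ratr n m : (m <= n)%N ->
  \sum_(i < n.+1 | (n - i <= m)%N)
     'C(n, i)%:R * ratr (bernoulli (n - i)) / i.+1%:R * 'C(i.+1, (m - (n - i)).+1)%:R
  = (m == 0%N)%:R :> k.
Proof.
move=> le_mn; rewrite -(ratr_nat k) -(bernoulli_binomial_sum le_mn) ratr_sum.
by apply: eq_bigr => i _; rewrite !ratrM !ratr_nat ratr_natS_inv.
Qed.

End QAlgebra.

Section AdjointAction.
Variables (R : pzRingType) (X : R).

Definition ad (W : R) : R := X * W - W * X.

Lemma expr_mul_ad (Z : R) p :
  X ^+ p * Z = \sum_(i < p.+1) (iter i ad Z * X ^+ (p - i)) *+ 'C(p, i).
Proof.
have mulX_ad W q : X * (W * X ^+ q) = ad W * X ^+ q + W * X ^+ q.+1.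
  by rewrite /ad mulrBl exprS !mulrA subrK.
elim: p => [|p IH]; first by rewrite big_ord1 /= expr0 mul1r mulr1.
rewrite exprS -mulrA IH mulr_sumr.
rewrite (eq_bigr (fun i : 'I_p.+1 => (iter i.+1 ad Z * X ^+ (p - i)) *+ 'C(p, i)
   + (iter i ad Z * X ^+ (p.+1 - i)) *+ 'C(p, i))); last first.
  by move=> i _; rewrite -mulrnDl mulrnAr mulX_ad (subSn (ltnSE (ltn_ord i))).
rewrite big_split /= [in RHS]big_ord_recl /=.
rewrite [in RHS](eq_bigr (fun i : 'I_p.+1 => (iter i.+1 ad Z * X ^+ (p - i)) *+ 'C(p, i.+1)
   + (iter i.+1 ad Z * X ^+ (p - i)) *+ 'C(p, i))); last first.
  by move=> i _; rewrite /bump /= add0n binS mulrnDr subSS.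
rewrite big_split /= addrA [RHS]addrC; congr (_ + _).
rewrite big_ord_recl /= !subn0 !bin0; congr (_ + _).
rewrite [in RHS]big_ord_recr /= bin_small // mulr0n addr0.
by apply: eq_bigr => i _; rewrite /bump /= add0n subSS.
Qed.

Lemma sum_expr_mul_expr (Z : R) q :
  \sum_(p < q.+1) X ^+ p * Z * X ^+ (q - p)
  = \sum_(i < q.+1) (iter i ad Z * X ^+ (q - i)) *+ 'C(q.+1, i.+1).
Proof.
elim: q => [|q IH]; first by rewrite !big_ord1 /= !expr0 mul1r.
rewrite big_ord_recr /= subnn expr0 mulr1 expr_mul_ad.
rewrite (eq_bigr (fun p : 'I_q.+1 => (X ^+ p * Z * X ^+ (q - p)) * X)); last first.
  by move=> p _; rewrite (subSn (ltnSE (ltn_ord p))) exprSr mulrA.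
rewrite -mulr_suml IH mulr_suml.
rewrite [in RHS](eq_bigr (fun i : 'I_q.+2 => (iter i ad Z * X ^+ (q.+1 - i)) *+ 'C(q.+1, i.+1)
   + (iter i ad Z * X ^+ (q.+1 - i)) *+ 'C(q.+1, i))); last first.
  by move=> i _; rewrite binS mulrnDr.
rewrite big_split /=; congr (_ + _).
rewrite [in RHS]big_ord_recr /= bin_small // mulr0n addr0.
by apply: eq_bigr => i _; rewrite -mulrnAl -mulrA -exprSr mulrnAl (subSn (ltnSE (ltn_ord i))).
Qed.

End AdjointAction.

Lemma card_perm_fix0 q : #|[pred s : 'S_q.+1 | s ord0 == ord0]| = q`!.
Proof.
have fix0E : [pred s : 'S_q.+1 | s ord0 == ord0] =i perm_on [set~ ord0].
  move=> s; rewrite !inE; apply/idP/subsetP => [/eqP s0 x | sub].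
    by rewrite !inE; apply: contraNneq => ->; rewrite s0.
  by move: (sub ord0); rewrite !inE eqxx; case: eqP => // _ /(_ isT).
by rewrite (eq_card fix0E) card_perm cardsC1 card_ord.
Qed.

Lemma card_perm_at0 q (p : 'I_q.+1) : #|[pred s : 'S_q.+1 | s ord0 == p]| = q`!.
Proof.
rewrite -card_perm_fix0 -!sum1_card.
pose t := tperm ord0 p.
have mul_tK : involutive (fun s : 'S_q.+1 => s * t)%g by move=> s; rewrite -mulgA tperm2 mulg1.
rewrite (reindex _ (onW_bij _ (inv_bij mul_tK))); apply: eq_bigl => s.
by rewrite !inE permM -(tpermL ord0 p) (inj_eq perm_inj).
Qed.

Lemma sum_perm_at0 (V : nmodType) q (f : 'I_q.+1 -> V) :
  \sum_(s : 'S_q.+1) f (s ord0) = \sum_(p < q.+1) f p *+ q`!.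
Proof.
rewrite (partition_big (fun s : 'S_q.+1 => s ord0) xpredT) //=.
apply: eq_bigr => p _; rewrite (eq_bigr (fun _ => f p)) => [|s /eqP -> //].
by rewrite sumr_const card_perm_at0.
Qed.

Lemma prodr_if_eq (R : pzRingType) (X Y : R) q (p : 'I_q.+1) :
  \prod_(i < q.+1) (if i == p then Y else X) = X ^+ p * Y * X ^+ (q - p).
Proof.
rewrite -(big_mkord xpredT (fun i => if i == nat_of_ord p then Y else X)).
have le_pq : (p <= q)%N by rewrite -ltnS.
rewrite (@big_cat_nat _ _ _ p 0 q.+1) ?(leqW le_pq) //.
rewrite (@big_cat_nat _ _ _ p.+1 p q.+1) //=.
rewrite big_nat1 eqxx mulrA; congr (_ * _ * _).
  rewrite (@eq_big_nat _ _ _ 0 p _ (fun _ => X)) ?prodr_const_nat ?subn0 //.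
  by move=> i /andP[_ ip]; rewrite (ltn_eqF ip).
rewrite (@eq_big_nat _ _ _ p.+1 q.+1 _ (fun _ => X)) ?prodr_const_nat ?subSS //.
by move=> i /andP[pi _]; rewrite eq_sym (ltn_eqF pi).
Qed.

Lemma sum_ord_shift (V : nmodType) n d (F : nat -> nat -> V) : (d <= n)%N ->
  \sum_(l < (n - d).+1) F l (l + d)%N = \sum_(m < n.+1 | (d <= m)%N) F (m - d)%N m.
Proof.
move=> le_dn; rewrite -(big_mkord xpredT (fun l => F l (l + d)%N)).
rewrite -(big_geq_mkord d n.+1 xpredT (fun m => F (m - d)%N m)) (big_addn 0 n.+1 d).
by rewrite subSn //; apply: eq_bigr => l _; rewrite addnK.
Qed.

Section BernoulliExpansion.
Variables (k : comUnitRingType) (H : lalgType k).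
Hypothesis natS_unit : forall n : nat, (n.+1)%:R \is a @GRing.unit k.

Lemma bernoulli_ad_expansion (X Y : H) n :
  \sum_(i < n.+1) ('C(n, i)%:R * ratr (bernoulli (n - i))) *:
     ((i.+1%:R)^-1 *: \sum_(p < i.+1) X ^+ p * iter (n - i) (ad X) Y * X ^+ (i - p))
  = Y * X ^+ n.
Proof.
pose W m := iter m (ad X) Y * X ^+ (n - m).
have sym_shift (i : 'I_n.+1) : \sum_(p < i.+1) X ^+ p * iter (n - i) (ad X) Y * X ^+ (i - p)
    = \sum_(m < n.+1 | (n - i <= m)%N) W m *+ 'C(i.+1, (m - (n - i)).+1).
  have lt_in := ltn_ord i.
  rewrite sum_expr_mul_expr -(sum_ord_shift (fun l m => W m *+ 'C(i.+1, l.+1))); last lia.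
  have -> : (n - (n - i) = i)%N by lia.
  apply: eq_bigr => l _; rewrite /W -iterD.
  by have -> : (n - (l + (n - i)) = i - l)%N by have := ltn_ord l; lia.
under eq_bigr => i _ do rewrite sym_shift !scaler_sumr.
rewrite (exchange_big_dep xpredT) //=.
under eq_bigr => m _.
  rewrite (eq_bigr (fun i : 'I_n.+1 => ('C(n, i)%:R * ratr (bernoulli (n - i)) / i.+1%:R *
    'C(i.+1, (m - (n - i)).+1)%:R) *: W m)) => [|i _]; last first.
    by rewrite -scaler_nat !scalerA mulrA.
  rewrite -scaler_suml bernoulli_binomial_sum_ratr //; last exact: ltnSE (ltn_ord m).
  over.
rewrite big_ord_recl /= scale1r big1 ?addr0 => [|m _]; last by rewrite scale0r.
by rewrite /W subn0.
Qed.
End BernoulliExpansion.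

Section Symmetrization.
Variables (k : comUnitRingType) (g : lmodType k) (C : comAlgType k) (j : {linear g -> C}).
Variables (H : algType k) (iota : {linear g -> H}) (xi : {linear C -> H}).
Hypothesis natS_unit : forall n : nat, (n.+1)%:R \is a @GRing.unit k.
Hypothesis xi_sym : is_symmetrization j iota xi.

Lemma symmetrization_expr z m : xi (j z ^+ m) = iota z ^+ m.
Proof.
have := xi_sym (fun _ : 'I_m => z); rewrite prodr_const card_ord => ->.
rewrite (eq_bigr (fun _ => iota z ^+ m)) => [|s _]; last by rewrite prodr_const card_ord.
by rewrite sumr_const card_Sn -scaler_nat scalerA mulVr ?scale1r ?(natr_fact_unit natS_unit).
Qed.

Lemma symmetrization_expr_mul x y q :
  xi (j x ^+ q * j y) =
    (q.+1%:R)^-1 *: \sum_(p < q.+1) iota x ^+ p * iota y * iota x ^+ (q - p).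
Proof.
pose xs (i : 'I_q.+1) := if i == ord0 then y else x.
have := xi_sym xs; rewrite big_ord_recl /= {1}/xs eqxx.
rewrite (eq_bigr (fun _ => j x)) => [|i _]; last by rewrite /xs eq_sym (negbTE (neq_lift _ _)).
rewrite prodr_const card_ord mulrC => ->.
pose G (p : 'I_q.+1) := iota x ^+ p * iota y * iota x ^+ (q - p).
rewrite (eq_bigr (fun s : 'S_q.+1 => G (s^-1 ord0)%g)) => [|s _]; last first.
  rewrite /G -prodr_if_eq; apply: eq_bigr => i _.
  by rewrite /xs -{1}(permKV s ord0) (inj_eq perm_inj); case: ifP.
rewrite (reindex_inj invg_inj) /=.
rewrite (eq_bigr (fun s : 'S_q.+1 => G (s ord0))) => [|s _]; last by rewrite invgK.
rewrite sum_perm_at0 sumrMnl -scaler_nat scalerA factS natrM.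
by rewrite invrM ?(natr_fact_unit natS_unit) // mulrC mulrA mulrV ?(natr_fact_unit natS_unit) ?mul1r.
Qed.

End Symmetrization.

Theorem mainTheorem12
  (k : comUnitRingType)
  (hQ : forall n : nat, (n.+1)%:R \is a @GRing.unit k)
  (g : lmodType k) (br : g -> g -> g) (hbr : lie_bracket br)
  (H : algType k) (iota : {linear g -> H})
  (hH : is_enveloping_algebra br iota)
  (C : comAlgType k) (j : {linear g -> C})
  (hC : is_symmetric_algebra j)
  (xi : {linear C -> H}) (hxi : is_symmetrization j iota xi)
  (xi_inv : H -> C) (hxiK : cancel xi xi_inv) (hxiK' : cancel xi_inv xi)
  (h x : g) (n : nat) :
  Dop iota xi xi_inv h (j x ^+ n) = xi_inv (iota h * iota x ^+ n) /\
  xi_inv (iota h * iota x ^+ n) =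
    \sum_(i < n.+1)
       ('C(n, i)%:R * ratr (bernoulli (n - i))) *:
         (j x ^+ i * j (iter (n - i) (br x) h)).
Proof.
split; first by rewrite /Dop (symmetrization_expr hQ hxi).
have iota_iter m : iota (iter m (br x) h) = iter m (ad (iota x)) (iota h).
  by elim: m => //= m IH; rewrite hH.1 IH.
rewrite -[RHS]hxiK linear_sum; congr xi_inv.
rewrite -(bernoulli_ad_expansion hQ); apply: eq_bigr => i _.
by rewrite [RHS]linearZ /= (symmetrization_expr_mul hQ hxi) iota_iter.
Qed.
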